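(* Let $F_1,\dots,F_J:\mathbb{R}_+^N\to\mathbb{R}_+$ be upper semicontinuous, concave production functions that are homogeneous of degree 1 (i.e. $F_j(\lambda x)=\lambda F_j(x)$ for all $\lambda\ge 0$). Define the aggregate production function $F:\mathbb{R}_+^N\to\mathbb{R}_+$ by \[ F(x)=\max\Big\{\sum_{j=1}^J F_j(x_j): x_j\ge 0 \text{ for all } j,\ \sum_{j=1}^J x_j=x\Big\}. \] Take any $\bar{x}\in\mathbb{R}_{++}^N$ and let $w\in\mathbb{R}^N$ be a supergradient of $F$ at $\bar{x}$, that is, $F(x)-F(\bar{x})\le \langle w, x-\bar{x}\rangle$ for all $x\in\mathbb{R}_+^N$. Let $(\bar{x}_j)_{j=1}^J$ with $\bar{x}_j\ge 0$ and $\sum_{j=1}^J\bar{x}_j=\bar{x}$ be a solution of the maximization problem defining $F(\bar{x})$, and let $C$ be the smallest convex cone containing $\{\bar{x}_1,\dots,\bar{x}_J\}$. Then $F(x)=w\cdot x$ for all $x\in C$.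
   Context: $N$ inputs and one output; a production function is an upper semicontinuous map $\mathbb{R}_+^N\to\mathbb{R}_+$. There are $J$ firms with production functions $F_j$, and the aggregate production function $F$ is the maximum total output achievable by allocating the total input vector across firms. $w\cdot x$ and $\langle w,x\rangle$ denote the inner product. A set is a cone if it is closed under multiplication by nonnegative scalars. *)

From mathcomp Require Import all_boot all_order all_algebra.
From mathcomp Require Import boolp classical_sets reals.
Set Implicit Arguments. Unset Strict Implicit. Unset Printing Implicit Defensive.
Import Order.TTheory GRing.Theory Num.Theory.
Local Open Scope ring_scope.
Local Open Scope classical_set_scope.

Definition nonneg {R : realType} {N : nat} (x : 'I_N -> R) : Prop :=
  forall i, 0 <= x i.

Definition strictly_pos {R : realType} {N : nat} (x : 'I_N -> R) : Prop :=
  forall i, 0 < x i.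

Definition dotv {R : realType} {N : nat} (w x : 'I_N -> R) : R :=
  \sum_(i < N) w i * x i.

Definition usc_on_nonneg {R : realType} {N : nat} (f : ('I_N -> R) -> R) : Prop :=
  forall x, nonneg x -> forall e : R, 0 < e ->
    exists d : R, 0 < d /\
      forall y, nonneg y -> (forall i, `|y i - x i| < d) -> f y < f x + e.

Definition concave_on_nonneg {R : realType} {N : nat} (f : ('I_N -> R) -> R) : Prop :=
  forall x y (t : R), nonneg x -> nonneg y -> 0 <= t -> t <= 1 ->
    t * f x + (1 - t) * f y <= f (fun i => t * x i + (1 - t) * y i).

Definition homogeneous1 {R : realType} {N : nat} (f : ('I_N -> R) -> R) : Prop :=
  forall (l : R) x, 0 <= l -> nonneg x -> f (fun i => l * x i) = l * f x.

Definition production_function {R : realType} {N : nat} (f : ('I_N -> R) -> R) : Prop :=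
  (forall x, nonneg x -> 0 <= f x) /\ usc_on_nonneg f.

Definition allocation {R : realType} {N J : nat}
  (x : 'I_N -> R) (xs : 'I_J -> 'I_N -> R) : Prop :=
  (forall j, nonneg (xs j)) /\ (forall i, \sum_(j < J) xs j i = x i).

Definition total_output {R : realType} {N J : nat}
  (Fs : 'I_J -> ('I_N -> R) -> R) (xs : 'I_J -> 'I_N -> R) : R :=
  \sum_(j < J) Fs j (xs j).

(* Aggregate production function: the value of the maximization problem
   (written as a supremum; the maximum is attained under the hypotheses). *)
Definition aggregate {R : realType} {N J : nat}
  (Fs : 'I_J -> ('I_N -> R) -> R) (x : 'I_N -> R) : R :=
  sup [set v : R | exists xs, allocation x xs /\ v = total_output Fs xs].

Definition supergradient_at {R : realType} {N : nat}
  (f : ('I_N -> R) -> R) (xbar w : 'I_N -> R) : Prop :=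
  forall x, nonneg x -> f x - f xbar <= dotv w (fun i => x i - xbar i).

Definition is_cone {R : realType} {N : nat} (S : set ('I_N -> R)) : Prop :=
  forall (l : R) x, 0 <= l -> S x -> S (fun i => l * x i).

Definition is_convex {R : realType} {N : nat} (S : set ('I_N -> R)) : Prop :=
  forall x y (t : R), S x -> S y -> 0 <= t -> t <= 1 ->
    S (fun i => t * x i + (1 - t) * y i).

Definition convex_cone_hull {R : realType} {N J : nat}
  (p : 'I_J -> 'I_N -> R) : set ('I_N -> R) :=
  [set x | forall S : set ('I_N -> R),
      is_cone S -> is_convex S -> (forall j, S (p j)) -> S x].

From mathcomp Require Import all_boot all_order all_algebra.
From mathcomp Require Import boolp classical_sets reals.
From mathcomp Require Import lra.
Import Order.TTheory GRing.Theory Num.Theory.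
Local Open Scope ring_scope.
Local Open Scope classical_set_scope.

(* Homogeneity lets the supergradient inequality at xbar be scaled: for an
   allocation ys of y and t >= 0,
     t * sum_j F_j(ys_j) <= F(t y) <= F(xbar) + w.(t y - xbar),
   and letting t grow gives sum_j F_j(ys_j) <= w.y, hence F(y) <= w.y and,
   allocating y to a single firm, F_j(y) <= w.y.  The supergradient
   inequality at 0 gives F(xbar) >= w.xbar, so an optimal allocation has
   F_j(xbar_j) = w.xbar_j for every j, and the nonnegative combinations of
   the xbar_j, allocated piece by piece, produce exactly w.x. *)

Lemma nonpos_of_bounded_multiples {R : realFieldType} {d c : R} :
  (forall t, 0 <= t -> t * d <= c) -> d <= 0.
Proof.
move=> bounded; rewrite leNgt; apply/negP => d_gt0.
have t_ge0 : 0 <= (`|c| + 1) / d by rewrite divr_ge0 ?addr_ge0 // ltW.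
have := bounded _ t_ge0; rewrite divfK ?gt_eqF //.
move=> too_big; have := ler_norm c; lra.
Qed.

Lemma sum_delta_mul {R : realType} {J : nat} (j : 'I_J) (a : 'I_J -> R) :
  \sum_(k < J) (k == j)%:R * a k = a j.
Proof.
rewrite (bigD1 j) //= eqxx mul1r big1 ?addr0 // => k /negbTE ->.
by rewrite mul0r.
Qed.

Section DotProduct.
Context {R : realType} {N : nat}.
Implicit Types (w x y : 'I_N -> R).

Lemma dotvZ w x t : dotv w (fun i => t * x i) = t * dotv w x.
Proof. by rewrite /dotv mulr_sumr; apply: eq_bigr => i _; rewrite mulrCA. Qed.

Lemma dotvB w x y : dotv w (fun i => x i - y i) = dotv w x - dotv w y.
Proof. by rewrite /dotv -sumrB; apply: eq_bigr => i _; rewrite mulrBr. Qed.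

Lemma dotv0 w : dotv w (fun _ => 0) = 0.
Proof. by rewrite /dotv big1 // => i _; rewrite mulr0. Qed.

Lemma dotv_sum (J : nat) w (v : 'I_J -> 'I_N -> R) :
  dotv w (fun i => \sum_(j < J) v j i) = \sum_(j < J) dotv w (v j).
Proof.
rewrite /dotv exchange_big /=; apply: eq_bigr => i _.
by rewrite mulr_sumr.
Qed.

End DotProduct.

Section ConicCombinations.
Context {R : realType} {N J : nat} (p : 'I_J -> 'I_N -> R).

Definition conic_comb (l : 'I_J -> R) : 'I_N -> R :=
  fun i => \sum_(j < J) l j * p j i.

Definition conic_hull : set ('I_N -> R) :=
  [set x | exists2 l, (forall j, 0 <= l j) & x = conic_comb l].

Lemma conic_hull_cone : is_cone conic_hull.
Proof.
move=> c _ c_ge0 [l l_ge0 ->]; exists (fun j => c * l j).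
  by move=> j; rewrite mulr_ge0.
apply/funext => i; rewrite /conic_comb mulr_sumr.
by apply: eq_bigr => j _; rewrite mulrA.
Qed.

Lemma conic_hull_convex : is_convex conic_hull.
Proof.
move=> _ _ t [l1 l1_ge0 ->] [l2 l2_ge0 ->] t_ge0 t_le1.
exists (fun j => t * l1 j + (1 - t) * l2 j).
  by move=> j; rewrite addr_ge0 // mulr_ge0 // subr_ge0.
apply/funext => i; rewrite /conic_comb !mulr_sumr -big_split.
by apply: eq_bigr => j _; rewrite [RHS]mulrDl !mulrA.
Qed.

Lemma conic_hull_generators j : conic_hull (p j).
Proof.
exists (fun k => (k == j)%:R); first by move=> k; rewrite ler0n.
by apply/funext => i; rewrite /conic_comb sum_delta_mul.
Qed.

Lemma convex_cone_hull_sub_conic_hull : convex_cone_hull p `<=` conic_hull.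
Proof.
move=> x; apply; [exact: conic_hull_cone | exact: conic_hull_convex |].
exact: conic_hull_generators.
Qed.

Lemma allocation_conic_comb {l} :
  (forall j, nonneg (p j)) -> (forall j, 0 <= l j) ->
  allocation (conic_comb l) (fun j i => l j * p j i).
Proof.
by move=> p_ge0 l_ge0; split=> [j i|//]; rewrite mulr_ge0 //; apply: p_ge0.
Qed.

End ConicCombinations.

Section HomogeneousConcave.
Context {R : realType} {N : nat} {f : ('I_N -> R) -> R}.
Hypothesis f_hom : homogeneous1 f.

Lemma homogeneous1_0 : f (fun _ => 0) = 0.
Proof.
have -> : (fun _ : 'I_N => 0 : R) = (fun i => 0 * (fun _ : 'I_N => 0 : R) i).
  by apply/funext => i; rewrite mul0r.
by rewrite f_hom ?mul0r.
Qed.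

Hypothesis f_conc : concave_on_nonneg f.

Lemma concave_homogeneous_superadditive {a b} : nonneg a -> nonneg b ->
  f a + f b <= f (fun i => a i + b i).
Proof.
move=> a_ge0 b_ge0.
have half_ge0 : (0 : R) <= 1 / 2 by rewrite divr_ge0.
have half_le1 : (1 / 2 : R) <= 1 by rewrite ler_pdivrMr // mul1r ler1n.
have := f_conc _ _ _ a_ge0 b_ge0 half_ge0 half_le1.
set m := (fun i => _) => midpoint.
have m_ge0 : nonneg m by move=> i; rewrite /m addr_ge0 // mulr_ge0 // subr_ge0.
have -> : (fun i => a i + b i) = (fun i => 2 * m i).
  by apply/funext => i; rewrite /m; lra.
rewrite f_hom //; lra.
Qed.

Lemma concave_homogeneous_monotone : (forall x, nonneg x -> 0 <= f x) ->
  forall a b, nonneg a -> (forall i, a i <= b i) -> f a <= f b.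
Proof.
move=> f_ge0 a b a_ge0 a_le_b.
have d_ge0 : nonneg (fun i => b i - a i) by move=> i; rewrite subr_ge0.
have := concave_homogeneous_superadditive a_ge0 d_ge0.
have -> : (fun i => a i + (b i - a i)) = b by apply/funext => i; rewrite addrC subrK.
by have := f_ge0 _ d_ge0; lra.
Qed.

End HomogeneousConcave.

Section Aggregate.
Context {R : realType} {N J : nat} {Fs : 'I_J -> ('I_N -> R) -> R}.
Hypothesis Fs_mono :
  forall j a b, nonneg a -> (forall i, a i <= b i) -> Fs j a <= Fs j b.
Hypothesis Fs_hom : forall j, homogeneous1 (Fs j).
Implicit Types (x y : 'I_N -> R) (xs ys : 'I_J -> 'I_N -> R) (t : R).

Lemma allocation_nonneg {x xs} : allocation x xs -> nonneg x.
Proof.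
by case=> xs_ge0 xs_sum i; rewrite -xs_sum sumr_ge0 // => j _; apply: xs_ge0.
Qed.

Lemma allocation_le {x xs} : allocation x xs -> forall j i, xs j i <= x i.
Proof.
case=> xs_ge0 xs_sum j i; rewrite -xs_sum (bigD1 j) //= lerDl.
by rewrite sumr_ge0 // => k _; apply: xs_ge0.
Qed.

(* Monotonicity bounds the outputs of the allocations of x by
   sum_j F_j(x); for an unbounded set, [sup] would be a junk value. *)
Lemma total_output_le_aggregate {x xs} :
  allocation x xs -> total_output Fs xs <= aggregate Fs x.
Proof.
move=> xs_alloc; apply: ub_le_sup; last by exists xs.
exists (\sum_(j < J) Fs j x) => _ [ys [ys_alloc ->]].
apply: ler_sum => j _; apply: Fs_mono; first exact: ys_alloc.1.
exact: allocation_le.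
Qed.

Lemma total_output_conic_comb {p : 'I_J -> 'I_N -> R} {l} :
  (forall j, nonneg (p j)) -> (forall j, 0 <= l j) ->
  total_output Fs (fun j i => l j * p j i) = \sum_(j < J) l j * Fs j (p j).
Proof. by move=> p_ge0 l_ge0; apply: eq_bigr => j _; rewrite Fs_hom. Qed.

Lemma allocationZ {t x xs} : 0 <= t -> allocation x xs ->
  allocation (fun i => t * x i) (fun j i => t * xs j i).
Proof.
move=> t_ge0 [xs_ge0 xs_sum]; split.
  by move=> j i; rewrite mulr_ge0 //; apply: xs_ge0.
by move=> i; rewrite -mulr_sumr xs_sum.
Qed.

Lemma total_outputZ {t xs} : 0 <= t -> (forall j, nonneg (xs j)) ->
  total_output Fs (fun j i => t * xs j i) = t * total_output Fs xs.
Proof.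
move=> t_ge0 xs_ge0; rewrite (total_output_conic_comb (l := fun _ => t)) //.
by rewrite mulr_sumr.
Qed.

Lemma aggregate0_ge0 : 0 <= aggregate Fs (fun _ => 0).
Proof.
have zero_alloc : allocation (fun _ : 'I_N => 0 : R) (fun (_ : 'I_J) _ => 0).
  by split=> [j i | i]; rewrite ?big1.
apply: le_trans (total_output_le_aggregate zero_alloc).
by rewrite /total_output big1 // => j _; rewrite homogeneous1_0.
Qed.

Context {xbar w : 'I_N -> R}.
Hypothesis w_super : supergradient_at (aggregate Fs) xbar w.

Lemma total_output_le_dotv {y ys} : allocation y ys -> total_output Fs ys <= dotv w y.
Proof.
move=> ys_alloc; rewrite -subr_le0.
apply: (nonpos_of_bounded_multiples (c := aggregate Fs xbar - dotv w xbar)).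
move=> t t_ge0; have tys_alloc := allocationZ t_ge0 ys_alloc.
have := total_output_le_aggregate tys_alloc.
rewrite total_outputZ //; last exact: ys_alloc.1.
have := w_super _ (allocation_nonneg tys_alloc).
rewrite dotvB dotvZ; lra.
Qed.

Lemma firm_output_le_dotv j y : nonneg y -> Fs j y <= dotv w y.
Proof.
move=> y_ge0; pose l k : R := (k == j)%:R.
have l_ge0 k : 0 <= l k by rewrite ler0n.
have y_alloc := allocation_conic_comb (fun _ => y) (fun _ => y_ge0) l_ge0.
have := total_output_le_dotv y_alloc.
rewrite total_output_conic_comb // sum_delta_mul.
have -> // : conic_comb (fun _ => y) l = y.
by apply/funext => i; rewrite /conic_comb sum_delta_mul.
Qed.

Lemma dotv_le_aggregate : dotv w xbar <= aggregate Fs xbar.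
Proof.
have := w_super _ (fun i => lexx 0); rewrite dotvB dotv0.
by have := aggregate0_ge0; lra.
Qed.

Lemma optimal_firm_output {xbars} :
  allocation xbar xbars -> total_output Fs xbars = aggregate Fs xbar ->
  forall j, Fs j (xbars j) = dotv w (xbars j).
Proof.
move=> xbars_alloc xbars_opt.
have gap_ge0 j : 0 <= dotv w (xbars j) - Fs j (xbars j).
  by rewrite subr_ge0 firm_output_le_dotv //; exact: xbars_alloc.1.
have gap_sum : \sum_(j < J) (dotv w (xbars j) - Fs j (xbars j)) = 0.
  apply/eqP; rewrite eq_le sumr_ge0 // andbT sumrB -dotv_sum.
  have -> : (fun i => \sum_(j < J) xbars j i) = xbar.
    by apply/funext => i; exact: xbars_alloc.2.
  by have := dotv_le_aggregate; rewrite -xbars_opt /total_output; lra.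
move=> j; apply/eqP; rewrite eq_sym -subr_eq0; apply/eqP.
by move: j isT; apply/psumr_eq0P.
Qed.

Lemma aggregate_eq_dotv {x xs} :
  allocation x xs -> total_output Fs xs = dotv w x -> aggregate Fs x = dotv w x.
Proof.
move=> xs_alloc xs_out; apply/le_anti/andP; split.
  apply: ge_sup; first by exists (total_output Fs xs), xs.
  by move=> _ [ys [ys_alloc ->]]; exact: total_output_le_dotv.
by rewrite -xs_out; exact: total_output_le_aggregate.
Qed.

End Aggregate.

Theorem theorem2 (R : realType) (N J : nat)
  (Fs : 'I_J -> ('I_N -> R) -> R)
  (hprod : forall j, production_function (Fs j))
  (hconc : forall j, concave_on_nonneg (Fs j))
  (hhom : forall j, homogeneous1 (Fs j))
  (xbar : 'I_N -> R) (hxbar : strictly_pos xbar)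
  (w : 'I_N -> R) (hw : supergradient_at (aggregate Fs) xbar w)
  (xbars : 'I_J -> 'I_N -> R) (hall : allocation xbar xbars)
  (hopt : total_output Fs xbars = aggregate Fs xbar) :
  forall x, convex_cone_hull xbars x -> aggregate Fs x = dotv w x.
Proof.
have Fs_mono j := concave_homogeneous_monotone (hhom j) (hconc j) (hprod j).1.
have firm_out := optimal_firm_output Fs_mono hhom hw hall hopt.
move=> x /convex_cone_hull_sub_conic_hull [l l_ge0 ->].
have l_alloc := allocation_conic_comb xbars hall.1 l_ge0.
apply: (aggregate_eq_dotv Fs_mono hhom hw l_alloc).
rewrite (total_output_conic_comb hhom hall.1 l_ge0).
rewrite (dotv_sum _ w (fun j i => l j * xbars j i)).
by apply: eq_bigr => j _; rewrite firm_out dotvZ.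
Qed.
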